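(* Let $\mathcal{J}=\langle U,g,f\rangle$ satisfy the standing assumptions below. For every evaluation $\mu\in\Delta(\mathbb{R}_+)$, every $t\geq0$ and every $y_0\in\mathbb{R}^d$, $$V_\mu(y_0)\leq V_{\mathcal{T}_t\sharp\mu}(y_0)+2\,TV_t(\mu).$$
   Context: Setting: $U$ is a metric space, $g:\mathbb{R}^d\times U\to[0,1]$ is Borel measurable, $f:\mathbb{R}^d\times U\to\mathbb{R}^d$ is Borel measurable with $\|f(y,u)-f(\bar y,u)\|\leq L\|y-\bar y\|$ and $\|f(y,u)\|\leq a(1+\|y\|)$ for constants $L\ge0,a>0$. $\mathcal{U}$ is the set of measurable controls $u:[0,+\infty)\to U$; $y(t,u,y_0)$ is the solution of $y'=f(y,u)$, $y(0)=y_0$. $V_\mu(y_0)=\inf_{u\in\mathcal{U}}\int_{[0,+\infty)} g(y(s,u,y_0),u(s))\,d\mu(s)$; $V_{\mathcal{T}_t\sharp\mu}(y_0)=\inf_{u\in\mathcal{U}}\int_{[0,+\infty)} g(y(s+t,u,y_0),u(s+t))\,d\mu(s)$. $TV_t(\mu)=\sup_{Q\in\mathcal{B}(\mathbb{R}_+)}|\mu(Q)-\mu(Q+t)|$. *)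

From HB Require Import structures.
From mathcomp Require Import all_boot all_order all_algebra.
From mathcomp Require Import all_classical all_reals all_analysis.
Set Implicit Arguments. Unset Strict Implicit. Unset Printing Implicit Defensive.
Import Order.TTheory GRing.Theory Num.Theory.
Import numFieldNormedType.Exports.
Local Open Scope classical_set_scope.
Local Open Scope ring_scope.

Definition borel_set (T : topologicalType) : set (set T) := <<s open >>.

Definition borel_fun (T1 T2 : topologicalType) (h : T1 -> T2) : Prop :=
  forall B : set T2, borel_set B -> borel_set (h @^-1` B).

Definition control (R : realType) (U : topologicalType) (u : R -> U) : Prop :=
  forall B : set U, borel_set B ->
    measurable (`[0%R, +oo[%classic `&` u @^-1` B).

Definition trajectory (R : realType) (d : nat) (U : Type)
  (f : 'rV[R]_d -> U -> 'rV[R]_d) (u : R -> U) (y0 : 'rV[R]_d)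
  (y : R -> 'rV[R]_d) : Prop :=
  forall t : R, 0 <= t -> forall i : 'I_d,
    (@lebesgue_measure R).-integrable `[0, t] (fun s => ((f (y s) (u s)) 0 i)%:E)
    /\ y t 0 i = y0 0 i + Rintegral (@lebesgue_measure R) `[0, t]
                                  (fun s => (f (y s) (u s)) 0 i).

Definition V_mu (R : realType) (d : nat) (U : topologicalType)
  (g : 'rV[R]_d -> U -> R) (f : 'rV[R]_d -> U -> 'rV[R]_d)
  (mu : set R -> \bar R) (y0 : 'rV[R]_d) : \bar R :=
  ereal_inf [set x | exists u y, control u /\ trajectory f u y0 y /\
     x = (\int[mu]_(s in `[0%R, +oo[) (g (y s) (u s))%:E)%E].

(* V_{T_t # mu}(y0) = inf_u \int_[0,+oo) g(y(s+t,u,y0), u(s+t)) dmu(s) *)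
Definition V_shift (R : realType) (d : nat) (U : topologicalType)
  (g : 'rV[R]_d -> U -> R) (f : 'rV[R]_d -> U -> 'rV[R]_d)
  (mu : set R -> \bar R) (t : R) (y0 : 'rV[R]_d) : \bar R :=
  ereal_inf [set x | exists u y, control u /\ trajectory f u y0 y /\
     x = (\int[mu]_(s in `[0%R, +oo[) (g (y (s + t)) (u (s + t)))%:E)%E].

Definition TV (R : realType) (mu : set R -> \bar R) (t : R) : \bar R :=
  ereal_sup [set x | exists Q : set R, measurable Q /\ Q `<=` `[0%R, +oo[ /\
     x = (`| mu Q - mu [set (q + t)%R | q in Q] |)%E].

From HB Require Import structures.
From mathcomp Require Import all_boot all_order all_algebra.
From mathcomp Require Import all_classical all_reals all_analysis.
From mathcomp Require Import lra.
Import Order.TTheory GRing.Theory Num.Theory.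
Import numFieldNormedType.Exports.
Import HBNNSimple.
Local Open Scope classical_set_scope.
Local Open Scope ring_scope.

(* For every measurable A, splitting A along [t, +oo[ gives
   mu A <= mu (A `&` [t, +oo[) + mu ([0, t[) <= mu ((A - t) `&` R_+) + 2 TV_t(mu):
   the first term is compared with its translate Q + t for Q = (A - t) `&` R_+,
   the second with the translate [t, +oo[ of R_+ itself.  A setwise inequality
   nu1 <= nu2 + c between finite measures passes to simple functions with values
   in [0, 1] (sum the excess of nu1 over nu2 on the level sets where it is
   positive), hence to the integral of any [0, 1]-valued function, as the
   supremum of such simple integrals; no measurability of the running cost is
   needed.  Taking infima over controls concludes; only 0 <= g <= 1 is used, the
   remaining assumptions serve to make the value functions meaningful. *)

Section restricted_composition.
Context {d1 d2 : measure_display} {T1 : measurableType d1} {T2 : measurableType d2}.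
Context {R : realType}.
Variables (h : T1 -> T2) (D : set T1) (phi : {nnsfun T2 >-> R}).
Hypotheses (mh : measurable_fun setT h) (mD : measurable D).

Definition restr_comp (x : T1) : R := phi (h x) * \1_D x.

Lemma measurable_restr_comp : measurable_fun setT restr_comp.
Proof.
apply: measurable_realfun.measurable_funM; first exact: measurableT_comp.
exact: measurable_realfun.measurable_indic.
Qed.

Lemma finite_range_restr_comp : finite_set (range restr_comp).
Proof.
apply: (@sub_finite_set _ _ (0 |` range phi)); last first.
  by rewrite finite_setU; split; [exact: finite_set1 | exact: fimfunP].
move=> _ [x _ <-]; rewrite /restr_comp indicE.
by case: (_ \in _); rewrite ?mulr1 ?mulr0; [right; exists (h x) | left].
Qed.

Lemma restr_comp_ge0 x : 0 <= restr_comp x.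
Proof. by rewrite /restr_comp indicE; case: (_ \in _); rewrite ?mulr1 ?mulr0. Qed.

HB.instance Definition _ :=
  isMeasurableFun.Build _ _ _ _ restr_comp measurable_restr_comp.
HB.instance Definition _ := FiniteImage.Build _ _ restr_comp finite_range_restr_comp.
HB.instance Definition _ := isNonNegFun.Build _ _ restr_comp restr_comp_ge0.

Definition restr_comp_nnsfun : {nnsfun T1 >-> R} := restr_comp.

Lemma sintegral_restr_comp (mu : {measure set T1 -> \bar R}) :
  (sintegral mu restr_comp = sintegral (pushforward (mrestr mu mD) h) phi)%E.
Proof.
rewrite !sintegralET; apply: eq_fsbigr => r _.
have [->|r0] := eqVneq r 0; first by rewrite !mul0e.
congr (_ * mu _)%E; apply/seteqP; split => x /=; rewrite /restr_comp indicE.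
- case: (boolP (x \in D)) => [/set_mem xD|_]; rewrite ?mulr1 ?mulr0 => rE //.
  by rewrite -rE eqxx in r0.
- by move=> [<- /mem_set ->]; rewrite mulr1.
Qed.

End restricted_composition.

Local Open Scope ereal_scope.

Section sintegral_comparison.
Context {d : measure_display} {T : measurableType d} {R : realType}.

Lemma sintegralE_fine {nu : {measure set T -> \bar R}} (phi : {nnsfun T >-> R}) :
  fin_num_fun nu ->
  sintegral nu phi = (\sum_(x \in range phi) x * fine (nu (phi @^-1` [set x])))%R%:E.
Proof.
move=> finnu; rewrite sintegralE -fsumEFin //; apply: eq_fsbigr => x _.
by rewrite EFinM fineK // finnu.
Qed.

Context {nu1 nu2 : {measure set T -> \bar R}}.
Hypotheses (fin1 : fin_num_fun nu1) (fin2 : fin_num_fun nu2).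

Lemma sintegral_le_add_of_measure_le (c : R) (phi : {nnsfun T >-> R}) :
  (forall A, measurable A -> nu1 A <= nu2 A + c%:E) ->
  (forall x, phi x <= 1)%R ->
  sintegral nu1 phi <= sintegral nu2 phi + c%:E.
Proof.
move=> le12 phi1.
pose A x := phi @^-1` [set x].
have mA x : measurable (A x) by apply: measurable_funPTI; exact: measurable_set1.
pose a x := fine (nu1 (A x)); pose b x := fine (nu2 (A x)).
pose Q := [set x | b x < a x]%R.
have finS := @fimfunP _ _ phi.
have finSQ : finite_set (range phi `&` Q) by apply: sub_finite_set finS => x [].
have sumSQ :
    (\sum_(x \in range phi `&` Q) a x <= \sum_(x \in range phi `&` Q) b x + c)%R.
  pose AQ := \bigcup_(x in range phi `&` Q) A x.
  have nuAQ (nu : {measure set T -> \bar R}) : fin_num_fun nu ->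
      nu AQ = (\sum_(x \in range phi `&` Q) fine (nu (A x)))%:E.
    move=> finnu; rewrite measure_fin_bigcup //; last exact: trivIset_preimage1.
    by rewrite -fsumEFin //; apply: eq_fsbigr => x _; rewrite fineK // finnu.
  have := le12 AQ (fin_bigcup_measurable finSQ (fun x _ => mA x)).
  by rewrite !nuAQ // -EFinD lee_fin.
have term x : range phi x -> (x * a x + (if x \in Q then b x else 0) <=
                               x * b x + (if x \in Q then a x else 0))%R.
  move=> [s _ <-]; have := phi1 s; have := @fun_ge0 _ _ phi s.
  have [Qs|Qs] := ltP (b (phi s)) (a (phi s)).
  - by rewrite mem_set //; nra.
  - by rewrite memNset /Q /= ?ltNge ?Qs //; nra.
rewrite (sintegralE_fine phi fin1) (sintegralE_fine phi fin2) -EFinD lee_fin.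
have : (\sum_(x \in range phi) (x * a x + (if x \in Q then b x else 0)) <=
        \sum_(x \in range phi) (x * b x + (if x \in Q then a x else 0)))%R.
  rewrite -lee_fin -!fsumEFin //; apply: (lee_fsum finS) => x Sx.
  by rewrite lee_fin; exact: term.
rewrite 2!(fsbig_split _ _ _ finS) -2!fsbig_mkcondr /=.
by move: sumSQ; rewrite /a /b /A; lra.
Qed.

End sintegral_comparison.

Lemma TV_ge0 {R : realType} (mu : probability R R) (t : R) : 0 <= TV mu t.
Proof.
apply: ereal_sup_ubound; exists set0; split => //; split => //.
by rewrite image_set0 measure0 subee // abse0.
Qed.

Lemma lee_dist_add {R : realDomainType} (a b : \bar R) (c : R) :
  a \is a fin_num -> b \is a fin_num -> `|a - b| <= c%:E ->
  a <= b + c%:E /\ b <= a + c%:E.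
Proof.
move: a b => [a| |] [b| |] // _ _.
by rewrite -EFinB abse_EFin -!EFinD !lee_fin => /ler_normlP[? ?]; split; lra.
Qed.

Section shift_comparison.
Context {R : realType} {mu : probability R R} {t tau : R}.
Local Notation D := (`[0%R, +oo[%classic : set R).
Local Notation Dt := (`[t, +oo[%classic : set R).
Hypotheses (muD : mu D = 1) (t_ge0 : (0 <= t)%R) (TVE : TV mu t = tau%:E).

Let mD : measurable D. Proof. exact: measurable_itv. Qed.
Let mDt : measurable Dt. Proof. exact: measurable_itv. Qed.
Let DtD : Dt `<=` D. Proof. by move=> x /= /[!in_itv] /= /[!andbT]; exact: le_trans. Qed.

Lemma measurable_shift : measurable_fun setT (shift t).
Proof. exact: measurable_realfun.measurable_funD. Qed.

Let measurable_shift_preimage {A} : measurable A -> measurable (shift t @^-1` A `&` D).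
Proof.
move=> mA; apply: measurableI => //.
by rewrite -[X in measurable X]setTI; exact: measurable_shift.
Qed.

(* The measure instance of [pushforward] depends on a proof of measurability,
   which canonical structure inference cannot supply. *)
Definition mu_shift : {measure set R -> \bar R}.
Proof. by apply: (pushforward (mrestr mu mD) (shift t)); exact: measurable_shift. Defined.

Lemma mu_shiftE A : mu_shift A = mu (shift t @^-1` A `&` D). Proof. by []. Qed.

Lemma fin_num_mu_shift : fin_num_fun mu_shift.
Proof.
by move=> A mA; rewrite mu_shiftE fin_num_measure //; exact: measurable_shift_preimage.
Qed.

Lemma image_shift_preimage (A : set R) :
  shift t @` (shift t @^-1` A `&` D) = A `&` Dt.
Proof.
apply/seteqP; split => x /=.
  move=> [q [Aq]]; rewrite /= in_itv /= andbT => q0 <-.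
  by split => //; rewrite /= in_itv /= andbT /shift lerDr.
rewrite /= in_itv /= andbT => -[Ax tx]; exists (x - t)%R; last exact: subrK.
by split; [rewrite /= /shift subrK | rewrite /= in_itv /= andbT subr_ge0].
Qed.

Lemma TV_ub {Q : set R} : measurable Q -> Q `<=` D ->
  `|mu Q - mu (shift t @` Q)| <= TV mu t.
Proof. by move=> mQ QD; apply: ereal_sup_ubound; exists Q. Qed.

Lemma measure_init_segment_le : mu (D `\` Dt) <= tau%:E.
Proof.
have := TV_ub mD (@subset_refl _ D).
have -> : shift t @` D = Dt.
  by have := image_shift_preimage setT; rewrite preimage_setT !setTI.
rewrite TVE => /lee_dist_add[| |le _]; rewrite ?fin_num_measure //.
rewrite (measureD mD mDt); last by rewrite ltey_eq fin_num_measure.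
by rewrite setIidr // leeBlDr ?fin_num_measure // addeC.
Qed.

Lemma measure_le_mu_shift (A : set R) : measurable A ->
  mu A <= mu_shift A + (2 * tau)%:E.
Proof.
move=> mA.
have mAD : measurable (A `&` D) by exact: measurableI.
have muAD : mu A = mu (A `&` D).
  rewrite (measureDI _ mA mD) [X in X + _](_ : _ = 0%E) ?add0e //.
  apply: (@subset_measure0 _ _ _ mu _ (~` D)) => //.
  - exact: measurableD.
  - exact: measurableC.
  - by apply: eq_trans (probability_setC mu mD) _; rewrite muD subee.
have tailA : mu (A `&` Dt) <= mu_shift A + tau%:E.
  have := TV_ub (measurable_shift_preimage mA) (@subIsetr _ _ _).
  rewrite image_shift_preimage TVE => /lee_dist_add[| | _ //]; apply: fin_num_measure.
  - exact: measurable_shift_preimage.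
  - exact: measurableI.
have initA : mu (A `&` D `\` Dt) <= tau%:E.
  apply: le_trans measure_init_segment_le; apply: le_measure; rewrite ?inE.
  - exact: measurableD.
  - exact: measurableD.
  - by move=> x [[]].
have -> : (2 * tau)%:E = tau%:E + tau%:E by rewrite -EFinD mulr_natl mulr2n.
rewrite muAD (measureDI _ mAD mDt) addeCA -setIA (setIidr DtD).
exact: leeD.
Qed.

Lemma integral_le_shift {F : R -> R} : (forall s, 0 <= F s <= 1)%R ->
  \int[mu]_(s in D) (F s)%:E <= \int[mu]_(s in D) (F (s + t))%:E + (2 * tau)%:E.
Proof.
move=> F01.
rewrite !ge0_integralE => [|s _|s _]; last 2 first.
- by case/andP: (F01 (s + t)%R).
- by case/andP: (F01 s).
apply: ge_ereal_sup => _ [phi phiF <-].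
have phiF' y : (phi y <= F y)%R.
  move: (phiF y); rewrite patchE; case: (_ \in _); rewrite lee_fin // => /le_trans.
  by apply; case/andP: (F01 y).
have phi1 y : (phi y <= 1)%R by apply: le_trans (phiF' y) _; case/andP: (F01 y).
have fin_mu : fin_num_fun mu by move=> A mA; exact: fin_num_measure.
apply: le_trans (sintegral_le_add_of_measure_le fin_mu fin_num_mu_shift (2 * tau) phi
  measure_le_mu_shift phi1) _.
rewrite leeD2rE //; apply: ereal_sup_ubound.
exists (restr_comp_nnsfun (shift t) D phi measurable_shift mD).
  move=> x; rewrite patchE /= /restr_comp indicE.
  by case: (_ \in _); rewrite ?mulr1 ?mulr0 lee_fin ?phiF'.
exact: sintegral_restr_comp.
Qed.

End shift_comparison.

Local Close Scope ereal_scope.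

Theorem mainTheorem11 (R : realType) (d : nat) (U : pseudoMetricType R)
  (g : 'rV[R]_d -> U -> R) (f : 'rV[R]_d -> U -> 'rV[R]_d) (L a : R)
  (HU : hausdorff_space U)
  (Hg01 : forall y u, 0 <= g y u <= 1)
  (Hgm : borel_fun (fun p : 'rV[R]_d * U => g p.1 p.2))
  (Hfm : borel_fun (fun p : 'rV[R]_d * U => f p.1 p.2))
  (HL : 0 <= L) (Ha : 0 < a)
  (Hlip : forall (y ybar : 'rV[R]_d) (u : U), `|f y u - f ybar u| <= L * `|y - ybar|)
  (Hgrowth : forall (y : 'rV[R]_d) (u : U), `|f y u| <= a * (1 + `|y|))
  (mu : probability R R) (Hmu : mu `[0%R, +oo[%classic = 1%E)
  (t : R) (Ht : 0 <= t) (y0 : 'rV[R]_d) :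
  (V_mu g f mu y0 <= V_shift g f mu t y0 + 2%:E * TV mu t)%E.
Proof.
have Vshift_ge0 : (0 <= V_shift g f mu t y0)%E.
  apply: le_ereal_inf_tmp => _ [u [y [_ [_ ->]]]]; apply: integral_ge0 => s _.
  by case/andP: (Hg01 (y (s + t)) (u (s + t))).
case TVE : (TV mu t) => [tau| |].
- rewrite -EFinM -leeBlDr //; apply: le_ereal_inf_tmp => _ [u [y [cu [tr ->]]]].
  rewrite leeBlDr //.
  apply: le_trans _ (integral_le_shift Hmu Ht TVE (fun s => Hg01 (y s) (u s))).
  by apply: ereal_inf_lbound; exists u, y.
- rewrite mulry gtr0_sg // mul1e addey ?leey //.
  by rewrite gt_eqF // (lt_le_trans ltNy0 Vshift_ge0).
- by have := TV_ge0 mu t; rewrite TVE.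
Qed.
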